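(* If Assumptions (A1), (A2), (A3) and (A4) below hold, then $V^*_{N_p+1}(x)\le V^*_{N_p}(x)$ for all $x\in\mathtt{X}_{N_p}$, where $V^*_{N_p}(x)$ is the optimal value function of $\mathtt{P}_{N_p}(x)$ with prediction horizon length $N_p$.
   Context: Consider the uncertain linear system $x^+=Ax+Bu+w$ with $(A,B)\in\mathrm{conv}(\{(A_i,B_i),\,i\in\Gamma_p\})$, $\Gamma_p=\{1,\dots,n_p\}$, $w\in\mathsf W$ (convex polytope containing the origin in its interior), constraints $x\in\mathbb X$, $u\in\mathbb U$ (polytopes). The disturbance set is split as $\mathsf W\subseteq\overline{\mathsf W}\oplus\underline{\mathsf W}$ with $\overline{\mathsf W}=\mathrm{conv}\{w_l,\,l\in\Gamma_{\overline w}\}$ (large) and $\underline{\mathsf W}$ (small). Nominal model $z^+=A_iz+B_iv+w$, $w\in\overline{\mathsf W}$; control $u=v+K_{\mathrm{inv}}(x-z)$; $\mathsf S$ satisfies $(A_i+B_iK_{\mathrm{inv}})\mathsf S\oplus\underline{\mathsf W}\subseteq\mathsf S$; tightened sets $\mathbb Z=\mathbb X\ominus\mathsf S$, $\mathbb V=\mathbb U\ominus K_{\mathrm{inv}}\mathsf S$. $\mathtt{P}_{N_p}(x)$ is the tube-enhanced multi-stage MPC problem: a scenario tree with nodes $z_k^j$, inputs $v_k^j$, $n_d=n_pn_{\overline w}$ branches $z_{k+1}^c=A_iz_k^j+B_iv_k^j+w_l$ per node up to the robust horizon $N_r$, with $z_k^j\in\mathbb Z$, $v_k^j\in\mathbb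 V$; beyond $N_r$ one tube $\mathsf Z_k^j$ per scenario with policy $v_k^j+K_{\mathrm{pred}}z$, $(A_i+B_iK_{\mathrm{pred}})\mathsf Z_k^j\oplus\{B_iv_k^j\}\oplus\overline{\mathsf W}\subseteq\mathsf Z_{k+1}^j$, $z_{N_r}^j\in\mathsf Z_{N_r}^j\subseteq\mathbb Z$, $\mathsf Z_k^j\subseteq\mathbb Z$, $\{v_k^j\}\oplus K_{\mathrm{pred}}\mathsf Z_k^j\subseteq\mathbb V$, $\mathsf Z_{N_p}^j\subseteq\mathbb Z_f$, and $x\in\{z_0^1\}\oplus\mathsf S$. Cost: $\sum_{k=0}^{N_r-1}\sum_j\omega_k^j\ell(z_k^j,v_k^j)+\sum_{k=N_r}^{N_p-1}\max_{\tilde z_k^j\in\mathsf Z_k^j}\sum_j\omega_k^j\ell(\tilde z_k^j,v_k^j+K_{\mathrm{pred}}\tilde z_k^j)+\max\sum_jV_f(\tilde z_{N_p}^j)$. $\mathtt{X}_{N_p}$ is its feasible set. (A1) Weights: each realization $(A_i,B_i,w_l)$ has a positive weight; the root weight satisfies $0<\omega_0^1\le$ all realization weights; nodes at stages $1,\dots,N_r-1$ carry the weight of the realization producing them; tube weights are $\omega_k^j=n_d^{k-N_r}\omega_{\mathrm{tube}}$ for $k=N_r,\dots,N_p-1$ with bounded $\omega_{\mathrm{tube}}\ge$ all realization weights. (A2) $\mathsf S$ is a convex compact disturbance invariant polytope with $\mathsf S\subset\mathbb X$, $K_{\mathrm{inv}}\mathsf S\subset\mathbb U$ (and $\mathsf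 S=\{0\}$ if $\underline{\mathsf W}=\{0\}$). (A3) $\mathbb Z_f\subseteq\mathbb X\ominus\mathsf S$ is a robust positively invariant polytope containing the origin for $K_f=K_{\mathrm{pred}}$, $K_f\mathbb Z_f\subseteq\mathbb U\ominus K_{\mathrm{inv}}\mathsf S$, and for all tubes $\mathsf Z\subseteq\mathbb Z_f$, $(A_i+B_iK_f)\mathsf Z\oplus\overline{\mathsf W}\subseteq\mathsf Z^+\subseteq\mathbb Z_f$ for all $i$. (A4) $\ell$ and $V_f$ are convex, positive definite; $\ell(z,v)\ge c|z|_{\mathbb Z_f}$ for $z\in\mathbb Z\setminus\mathbb Z_f$ with $|z|_{\mathbb Z_f}=\min_{y\in\mathbb Z_f}\|z-y\|_p$, $c>0$; $\ell(z,K_fz)=0$ and $V_f(z)=0$ on $\mathbb Z_f$; $\max_{\tilde z\in\mathsf Z}\ell(\tilde z,v+K_{\mathrm{pred}}\tilde z)\ge c'|\tilde z|_{\mathbb Z_f}$ for $\mathsf Z\subseteq\mathbb Z\setminus\mathbb Z_f$ ($c'>0$), and $\max_{\tilde z\in\mathsf Z}\ell(\tilde z,K_f\tilde z)=0$, $\max_{\tilde z\in\mathsf Z}V_f(\tilde z)=0$ for $\mathsf Z\subseteq\mathbb Z_f$. *)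

From HB Require Import structures.
From mathcomp Require Import all_boot all_order all_algebra.
From mathcomp Require Import all_classical all_reals all_analysis.
Set Implicit Arguments. Unset Strict Implicit. Unset Printing Implicit Defensive.
Import Order.TTheory GRing.Theory Num.Theory.
Local Open Scope classical_set_scope.
Local Open Scope ring_scope.

Section SetOps.
Variable R : realType.

Definition lin_img n m (M : 'M[R]_(m, n)) (A : set 'cV[R]_n) : set 'cV[R]_m :=
  [set M *m a | a in A].
Definition msum n (A B : set 'cV[R]_n) : set 'cV[R]_n :=
  [set z | exists2 a, A a & exists2 b, B b & z = a + b].
Definition pdiff n (A B : set 'cV[R]_n) : set 'cV[R]_n :=
  [set z | forall b, B b -> A (z + b)].
Definition conv_hull n k (v : 'I_k -> 'cV[R]_n) : set 'cV[R]_n :=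
  [set z | exists lam : 'I_k -> R,
     [/\ forall i, 0 <= lam i, \sum_i lam i = 1 & z = \sum_i lam i *: v i]].
Definition is_polytope n (P : set 'cV[R]_n) :=
  exists k (v : 'I_k -> 'cV[R]_n), P = conv_hull v.
Definition origin_in_interior n (W : set 'cV[R]_n) :=
  exists2 e : R, 0 < e & forall w : 'cV[R]_n, (forall i, `|w i 0| < e) -> W w.
Definition pnorm n (p : R) (z : 'cV[R]_n) : R :=
  (\sum_i `|z i 0| `^ p) `^ p^-1.
Definition setdist n (p : R) (Zf : set 'cV[R]_n) (z : 'cV[R]_n) : R :=
  inf [set pnorm p (z - y) | y in Zf].
Definition convex_fun n (f : 'cV[R]_n -> R) :=
  forall z1 z2 (t : R), 0 <= t <= 1 ->
    f (t *: z1 + (1 - t) *: z2) <= t * f z1 + (1 - t) * f z2.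
Definition convex_fun2 n m (f : 'cV[R]_n -> 'cV[R]_m -> R) :=
  forall z1 z2 v1 v2 (t : R), 0 <= t <= 1 ->
    f (t *: z1 + (1 - t) *: z2) (t *: v1 + (1 - t) *: v2)
      <= t * f z1 v1 + (1 - t) * f z2 v2.
End SetOps.

(* Problem data.  Realizations are indexed by pairs (i,l) in Gamma_p x Gamma_wbar
   (so n_d = np * nw).  Wbar = conv{wv l}. *)
Record mpc_data (R : realType) (n m np nw : nat) := MPCData {
  Am : 'I_np -> 'M[R]_n;
  Bm : 'I_np -> 'M[R]_(n, m);
  W : set 'cV[R]_n;
  wv : 'I_nw -> 'cV[R]_n;
  Wund : set 'cV[R]_n;
  Xc : set 'cV[R]_n;
  Uc : set 'cV[R]_m;
  Sinv : set 'cV[R]_n;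
  Kinv : 'M[R]_(m, n);
  Kpred : 'M[R]_(m, n);
  Zf : set 'cV[R]_n;
  ell : 'cV[R]_n -> 'cV[R]_m -> R;
  Vf : 'cV[R]_n -> R;
  Nr : nat;
  rw : ('I_np * 'I_nw) -> R;
  w0 : R;
  wtube : R
}.

Section Problem.
Variables (R : realType) (n m np nw : nat) (P : mpc_data R n m np nw).
Local Open Scope classical_set_scope.
Local Open Scope ring_scope.

Definition Realiz := ('I_np * 'I_nw)%type.
Definition Wbar : set 'cV[R]_n := conv_hull (wv P).
Definition Acl (i : 'I_np) (K : 'M[R]_(m, n)) : 'M[R]_n := Am P i + Bm P i *m K.
Definition Zset : set 'cV[R]_n := pdiff (Xc P) (Sinv P).
Definition Vset : set 'cV[R]_m := pdiff (Uc P) (lin_img (Kinv P) (Sinv P)).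

(* A tree node at stage k <= Nr is identified with the
   sequence of the k realizations leading to it from the root ([::] = root);
   a scenario j is a node at stage Nr.  Beyond Nr, scenario j has tubes
   Ztube j k and inputs vtube j k. *)
Record decision := Decision {
  zn : seq Realiz -> 'cV[R]_n;
  vn : seq Realiz -> 'cV[R]_m;
  Ztube : seq Realiz -> nat -> set 'cV[R]_n;
  vtube : seq Realiz -> nat -> 'cV[R]_m
}.

Definition feasible (Np : nat) (x : 'cV[R]_n) (d : decision) : Prop :=
  [/\ msum [set zn d [::]] (Sinv P) x,
      (forall s : seq Realiz, (size s <= Nr P)%N -> Zset (zn d s)),
      (forall s : seq Realiz, (size s < Nr P)%N ->
         Vset (vn d s) /\
         forall i l, zn d (rcons s (i, l)) = Am P i *m zn d s + Bm P i *m vn d s + wv P l)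
    & (forall j : seq Realiz, size j = Nr P ->
       [/\ Ztube d j (Nr P) (zn d j),
           (forall k, (Nr P <= k <= Np)%N ->
              is_polytope (Ztube d j k) /\ Ztube d j k `<=` Zset),
           (forall k, (Nr P <= k < Np)%N ->
              (forall i, msum (msum (lin_img (Acl i (Kpred P)) (Ztube d j k))
                                    [set Bm P i *m vtube d j k]) Wbar
                         `<=` Ztube d j k.+1) /\
              msum [set vtube d j k] (lin_img (Kpred P) (Ztube d j k)) `<=` Vset)
         & Ztube d j Np `<=` Zf P])].

Definition nodew (s : seq Realiz) : R := if s is r :: s' then rw P (last r s') else w0 P.
Definition tubew (k : nat) : R := ((np * nw) ^ (k - Nr P))%:R * wtube P.

Local Open Scope ereal_scope.
Definition cost (Np : nat) (d : decision) : \bar R :=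
  (\sum_(k < Nr P) \sum_(s : k.-tuple Realiz) nodew s * ell P (zn d s) (vn d s))%R%:E
  + \sum_(Nr P <= k < Np)
      ereal_sup [set (\sum_(j : (Nr P).-tuple Realiz)
                        tubew k * ell P (zt j) (vtube d (tval j) k + Kpred P *m zt j))%R%:E
                | zt in [set zt : (Nr P).-tuple Realiz -> 'cV[R]_n |
                           forall j, Ztube d (tval j) k (zt j)]]
  + ereal_sup [set (\sum_(j : (Nr P).-tuple Realiz) Vf P (zt j))%R%:E
              | zt in [set zt : (Nr P).-tuple Realiz -> 'cV[R]_n |
                         forall j, Ztube d (tval j) Np (zt j)]].

(* feasible set X_Np and optimal value function V*_Np (+oo if infeasible) *)
Definition feasible_set (Np : nat) : set 'cV[R]_n :=
  [set x | exists d, feasible Np x d].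
Definition Vopt (Np : nat) (x : 'cV[R]_n) : \bar R :=
  ereal_inf [set cost Np d | d in [set d | feasible Np x d]].
Local Close Scope ereal_scope.

Definition standing : Prop :=
  [/\ (0 < np)%N, is_polytope (W P) /\ origin_in_interior (W P),
      W P `<=` msum Wbar (Wund P),
      is_polytope (Xc P) /\ is_polytope (Uc P)
    & forall i, msum (lin_img (Acl i (Kinv P)) (Sinv P)) (Wund P) `<=` Sinv P].

Definition A1 : Prop :=
  [/\ forall r, 0 < rw P r, 0 < w0 P, forall r, w0 P <= rw P r
    & forall r, rw P r <= wtube P].

Definition A2 : Prop :=
  [/\ is_polytope (Sinv P), Sinv P `<=` Xc P, lin_img (Kinv P) (Sinv P) `<=` Uc P
    & Wund P = [set 0] -> Sinv P = [set 0]].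

Definition A3 : Prop :=
  [/\ is_polytope (Zf P) /\ Zf P 0, Zf P `<=` Zset,
      forall i, msum (lin_img (Acl i (Kpred P)) (Zf P)) Wbar `<=` Zf P,
      lin_img (Kpred P) (Zf P) `<=` Vset
    & forall Z, is_polytope Z -> Z `<=` Zf P ->
        exists Zp, [/\ is_polytope Zp,
                       forall i, msum (lin_img (Acl i (Kpred P)) Z) Wbar `<=` Zp
                     & Zp `<=` Zf P]].

Definition A4 : Prop :=
  [/\ convex_fun2 (ell P), convex_fun (Vf P),
      (forall z v, 0 <= ell P z v) /\ (forall z, 0 <= Vf P z),
      (ell P 0 0 = 0 /\ Vf P 0 = 0) /\
      (forall z, Zf P z -> ell P z (Kpred P *m z) = 0 /\ Vf P z = 0)
    & exists2 p : R, 1 <= p &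
      [/\ exists2 c : R, 0 < c & forall z v, Zset z -> ~ Zf P z ->
              c * setdist p (Zf P) z <= ell P z v,
          exists2 c' : R, 0 < c' & forall Z v, is_polytope Z -> Z !=set0 ->
              Z `<=` Zset `\` Zf P -> forall zt, Z zt ->
              ((c' * setdist p (Zf P) zt)%:E <=
                 ereal_sup [set (ell P z (v + Kpred P *m z))%:E | z in Z])%E
        & forall Z, is_polytope Z -> Z !=set0 -> Z `<=` Zf P ->
              ereal_sup [set (ell P z (Kpred P *m z))%:E | z in Z] = 0%E /\
              ereal_sup [set (Vf P z)%:E | z in Z] = 0%E]].

End Problem.

From Pilot Require Import Defs.
From HB Require Import structures.
From mathcomp Require Import all_boot all_order all_algebra.
From mathcomp Require Import all_classical all_reals all_analysis.
From mathcomp Require Import zify.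
Set Implicit Arguments. Unset Strict Implicit. Unset Printing Implicit Defensive.
Import Order.TTheory GRing.Theory Num.Theory.
Local Open Scope classical_set_scope.
Local Open Scope ring_scope.

(* Take any feasible plan for horizon N_p and append one stage: at stage N_p
   every scenario keeps its terminal tube and uses the feed-forward input 0
   (so the feedback K_f acts alone), and the new terminal tube is the
   successor of the old one provided by (A3).  The plan stays feasible for
   horizon N_p + 1.  All tubes involved lie in Z_f, where both
   ell(z, K_f z) and V_f vanish: the new stage-N_p cost equals the old
   terminal cost and the new terminal cost is nonpositive.  So every cost
   attainable with horizon N_p is attainable, or beaten, with N_p + 1.
   Only the terminal ingredients of (A3) and (A4) are needed. *)

Section HorizonExtension.
Variables (R : realType) (n m np nw : nat) (P : mpc_data R n m np nw).
Local Notation decision := (decision R n m np nw).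
Local Notation scenario := ((Nr P).-tuple (Realiz np nw)).

Definition node_cost (d : decision) : R :=
  \sum_(k < Nr P) \sum_(s : k.-tuple (Realiz np nw))
     nodew P s * ell P (zn d s) (vn d s).

Definition tube_cost (d : decision) (k : nat) : \bar R :=
  ereal_sup [set (\sum_(j : scenario)
                    tubew P k * ell P (zt j) (vtube d (tval j) k + Kpred P *m zt j))%:E
            | zt in [set zt : scenario -> 'cV[R]_n |
                       forall j, Ztube d (tval j) k (zt j)]].

Definition terminal_cost (Np : nat) (d : decision) : \bar R :=
  ereal_sup [set (\sum_(j : scenario) Vf P (zt j))%:E
            | zt in [set zt : scenario -> 'cV[R]_n |
                       forall j, Ztube d (tval j) Np (zt j)]].

Lemma costE (Np : nat) (d : decision) :
  cost P Np d =
  ((node_cost d)%:E + \sum_(Nr P <= k < Np) tube_cost d k + terminal_cost Np d)%E.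
Proof. by []. Qed.

Definition terminal_successor (Z Zp : set 'cV[R]_n) : Prop :=
  [/\ is_polytope Zp,
      forall i, Defs.msum (lin_img (Acl P i (Kpred P)) Z) (Wbar P) `<=` Zp
    & Zp `<=` Zf P].

Definition extend_decision (Np : nat) (Zp : seq (Realiz np nw) -> set 'cV[R]_n)
    (d : decision) : decision :=
  Decision (zn d) (vn d)
    (fun j k => if k == Np.+1 then Zp j else Ztube d j k)
    (fun j k => if k == Np then 0 else vtube d j k).

Variables (Np : nat) (x : 'cV[R]_n) (d : decision).
Hypotheses (leq_Nr_Np : (Nr P <= Np)%N) (feas_d : feasible P Np x d).

Lemma terminal_tube_sub_Zf (j : seq (Realiz np nw)) :
  size j = Nr P -> Ztube d j Np `<=` Zf P.
Proof. by move=> sz_j; case: feas_d => _ _ _ /(_ j sz_j) []. Qed.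

Lemma terminal_successors_exist :
  (forall Z, is_polytope Z -> Z `<=` Zf P -> exists Zp, terminal_successor Z Zp) ->
  exists Zp : seq (Realiz np nw) -> set 'cV[R]_n,
    forall j, size j = Nr P -> terminal_successor (Ztube d j Np) (Zp j).
Proof.
move=> succ.
suff /choice[Zp succ_Zp] : forall j, exists Zj,
    size j = Nr P -> terminal_successor (Ztube d j Np) Zj by exists Zp.
move=> j.
have [sz_j|] := pselect (size j = Nr P); last by exists set0.
case: feas_d => _ _ _ /(_ j sz_j) [_ tubes_j _ _].
have [|poly_j _] := tubes_j Np; first by rewrite leq_Nr_Np leqnn.
have [Zp succ_j] := succ _ poly_j (terminal_tube_sub_Zf sz_j).
by exists Zp.
Qed.

Variable Zp : seq (Realiz np nw) -> set 'cV[R]_n.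
Hypothesis succ_Zp :
  forall j, size j = Nr P -> terminal_successor (Ztube d j Np) (Zp j).

Lemma feasible_extend_decision :
  Zf P `<=` Zset P -> lin_img (Kpred P) (Zf P) `<=` Vset P ->
  feasible P Np.+1 x (extend_decision Np Zp d).
Proof.
move=> Zf_Z KZf_V; case: feas_d => root nodes dyn tubes.
split=> // j sz_j; have [tube_Nr tube_k step_k tube_Np] := tubes j sz_j.
have [poly_succ step_succ succ_Zf] := succ_Zp sz_j.
split=> /=.
- by rewrite ifN_eq ?tube_Nr //; apply/eqP; lia.
- move=> k /andP[Nr_k k_Np1]; have [_|k_neq] := eqVneq k Np.+1.
    by split=> //; apply: subset_trans Zf_Z.
  by apply: tube_k; apply/andP; split=> //; move/eqP: k_neq; lia.
- move=> k /andP[Nr_k k_Np1]; rewrite ifN_eq; last by apply/eqP; lia.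
  have [->|k_neq] := eqVneq k Np; last first.
    by rewrite eqSS (negbTE k_neq); apply: step_k; apply/andP; split=> //; lia.
  rewrite !eqxx; split.
    move=> i _ [_ [a Za [_ -> ->]] [w Ww ->]].
    by rewrite mulmx0 addr0; apply: (step_succ i); exists a => //; exists w.
  move=> _ [_ -> [_ [z Zz <-] ->]]; rewrite add0r; apply: KZf_V.
  by exists z => //; apply: tube_Np.
- by rewrite eqxx.
Qed.

Hypothesis costless_Zf :
  forall z, Zf P z -> ell P z (Kpred P *m z) = 0 /\ Vf P z = 0.

Lemma tube_cost_extend_lt (k : nat) :
  (k < Np)%N -> tube_cost (extend_decision Np Zp d) k = tube_cost d k.
Proof.
by move=> k_Np; rewrite /tube_cost /= (ltn_eqF k_Np) (ltn_eqF (leqW k_Np)).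
Qed.

Lemma tube_cost_extend_horizon :
  tube_cost (extend_decision Np Zp d) Np = terminal_cost Np d.
Proof.
rewrite /tube_cost /terminal_cost /= eqxx (ltn_eqF (ltnSn Np)).
congr ereal_sup; apply: eq_imagel => zt Zzt.
have Zf_zt (j : scenario) : Zf P (zt j).
  exact: terminal_tube_sub_Zf (size_tuple j) _ (Zzt j).
rewrite !big1 // => j _; first by rewrite (costless_Zf (Zf_zt j)).2.
by rewrite add0r (costless_Zf (Zf_zt j)).1 mulr0.
Qed.

Lemma terminal_cost_extend_le0 :
  (terminal_cost Np.+1 (extend_decision Np Zp d) <= 0)%E.
Proof.
rewrite /terminal_cost /= eqxx; apply: ge_ereal_sup => _ [zt Zzt <-].
rewrite lee_fin big1 // => j _.
by have [_ _ /(_ _ (Zzt j)) /costless_Zf []] := succ_Zp (size_tuple j).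
Qed.

Lemma cost_extend_decision_le :
  (cost P Np.+1 (extend_decision Np Zp d) <= cost P Np d)%E.
Proof.
rewrite !costE big_nat_recr //= tube_cost_extend_horizon.
under eq_big_nat => k /andP[_ k_Np] do rewrite tube_cost_extend_lt //.
rewrite -!addeA leeD2l // leeD2l // -[leRHS]adde0 leeD2l //.
exact: terminal_cost_extend_le0.
Qed.

End HorizonExtension.

Theorem lemma3 (R : realType) (n m np nw : nat) (P : mpc_data R n m np nw) :
  standing P -> A1 P -> A2 P -> A3 P -> A4 P ->
  forall Np : nat, (Nr P <= Np)%N ->
  forall x : 'cV[R]_n, feasible_set P Np x ->
  (Vopt P Np.+1 x <= Vopt P Np x)%E.
Proof.
move=> _ _ _ [_ Zf_Z _ KZf_V succ] [_ _ _ [_ costless_Zf] _] Np leq_Nr_Np x _.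
apply: le_ereal_inf_tmp => _ [d feas_d <-].
have [Zp succ_Zp] := terminal_successors_exist leq_Nr_Np feas_d succ.
apply: ge_ereal_inf; exists (cost P Np.+1 (extend_decision Np Zp d)).
  by exists (extend_decision Np Zp d); first exact: feasible_extend_decision.
exact: (cost_extend_decision_le leq_Nr_Np feas_d succ_Zp costless_Zf).
Qed.
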